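(* Let $\mathcal{G}=(V,E)$ be a DAG with $V=[n]$, let $i,j\in V$ be distinct and $K\subseteq V\setminus\{i,j\}$ such that $K$ does not $d$-separate $i$ from $j$ in $\mathcal{G}$. Let $a,b\in[n]$ be distinct and $C\subseteq[n]\setminus\{a,b\}$. If \[ \phi_\mathcal{G}^\ast(\det\Sigma_{\{a\}\cup C,\{b\}\cup C})\in \langle \phi_\mathcal{G}^\ast(\det\Sigma_{\{i\}\cup K,\{j\}\cup K})\rangle : \Big(\prod_{S\subseteq V}\phi_\mathcal{G}^\ast(\det\Sigma_{S,S})\Big)^\infty, \] then $a\perp\!\!\!\perp b\mid C$ holds for every $\Sigma\in\mathcal{M}_{\mathcal{G},i\perp\!\!\!\perp j|K}$, i.e. $\det\Sigma_{\{a\}\cup C,\{b\}\cup C}=0$ for all such $\Sigma$.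
   Context: For a DAG $\mathcal{G}=(V,E)$ on $V=[n]$, let $\Lambda=(\lambda_{ij})$ with $\lambda_{ij}$ a free parameter if $i\to j\in E$ and $0$ otherwise, and $\Omega=\mathrm{diag}(\omega_1,\dots,\omega_n)$. Let $\phi_\mathcal{G}(\Lambda,\Omega)=(I-\Lambda)^{-T}\Omega(I-\Lambda)^{-1}$ and $\mathcal{M}_\mathcal{G}=\phi_\mathcal{G}(\mathbb{R}^E\times(0,\infty)^n)$, a set of positive definite matrices. $\mathbb{R}[\lambda,\omega]$ is the polynomial ring in the $\lambda_{ij}$ ($i\to j\in E$) and the $\omega_k$; $\phi_\mathcal{G}^\ast:\mathbb{R}[\sigma_{uv}]\to\mathbb{R}[\lambda,\omega]$ is the ring homomorphism sending $\sigma_{uv}$ to the $(u,v)$ entry of $\phi_\mathcal{G}(\Lambda,\Omega)$. $\Sigma_{A,B}$ is the submatrix with rows $A$, columns $B$. $\mathcal{M}_{\mathcal{G},i\perp\!\!\!\perp j|K}$ is the set of $\Sigma\in\mathcal{M}_\mathcal{G}$ with $\det\Sigma_{\{i\}\cup K,\{j\}\cup K}=0$. For an ideal $I$ and polynomial $g$, the saturation is $I:g^\infty=\{f: fg^k\in I\text{ for some }k\ge0\}$. $d$-separation is the standard criterion: $C$ $d$-separates $a,b$ if every path between them contains a non-collider in $C$ or a collider not in $C$ with no descendant in $C$. *)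

From HB Require Import structures.
From mathcomp Require Import all_boot all_order all_algebra.
From mathcomp Require Import mpoly.
From mathcomp Require Import reals.
Set Implicit Arguments. Unset Strict Implicit. Unset Printing Implicit Defensive.
Import Order.TTheory GRing.Theory Num.Theory.
Local Open Scope ring_scope.

Section Graphs.
Variable n : nat.
Implicit Types (E : rel 'I_n).

Definition is_DAG E : Prop := forall u v, E u v -> ~~ connect E v u.

Definition adj E : rel 'I_n := fun u v => E u v || E v u.

Definition is_path_between E (a b : 'I_n) (p : seq 'I_n) : Prop :=
  [/\ head a p = a, p != [::], path (adj E) a (behead p), last a p = b & uniq p].

Definition descendant E (v w : 'I_n) : bool := connect E v w.

Definition collider_at E (p : seq 'I_n) (k : nat) (x0 : 'I_n) : bool :=
  E (nth x0 p k.-1) (nth x0 p k) && E (nth x0 p k.+1) (nth x0 p k).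

Definition blocked E (C : {set 'I_n}) (p : seq 'I_n) (x0 : 'I_n) : Prop :=
  exists k, (0 < k < (size p).-1)%N /\
    ((~~ collider_at E p k x0 && (nth x0 p k \in C)) \/
     (collider_at E p k x0 && (nth x0 p k \notin C) &&
      [forall w, descendant E (nth x0 p k) w ==> (w \notin C)])).

Definition d_separates E (C : {set 'I_n}) (a b : 'I_n) : Prop :=
  forall p, is_path_between E a b p -> blocked E C p a.
End Graphs.

(* index map for rows {a} u C : position 0 is a, positions 1.. enumerate C *)
Definition idxAC (n : nat) (a : 'I_n) (C : {set 'I_n}) (i : 'I_#|C|.+1) : 'I_n :=
  if unlift ord0 i is Some k then enum_val k else a.
Arguments idxAC {n} a C i.

Section Minors.
Variables (T : comUnitRingType) (n : nat).


Definition minorAC (M : 'M[T]_n) (a b : 'I_n) (C : {set 'I_n}) : T :=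
  \det (\matrix_(i < #|C|.+1, j < #|C|.+1) M (idxAC a C i) (idxAC b C j)).

Definition pminor (M : 'M[T]_n) (S : {set 'I_n}) : T :=
  \det (\matrix_(i < #|S|, j < #|S|) M (enum_val i) (enum_val j)).

Definition phiG (L : 'M[T]_n) (w : 'rV[T]_n) : 'M[T]_n :=
  (invmx (1%:M - L))^T *m diag_mx w *m invmx (1%:M - L).
End Minors.

Section Rings.
Variables (R : realType) (n : nat).

(* variables of R[lambda, omega]: inl (u,v) is lambda_uv, inr k is omega_k.
   (variables lambda_uv for non-edges exist in this ring but are never used) *)
Definition LWvar := ('I_n * 'I_n + 'I_n)%type.
Definition nLW := #|{: LWvar}|.
Definition LWring := {mpoly R[nLW]}.

Definition Svar := ('I_n * 'I_n)%type.
Definition nS := #|{: Svar}|.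
Definition Sring := {mpoly R[nS]}.

Definition lam_var (u v : 'I_n) : LWring := 'X_(enum_rank (inl (u, v) : LWvar)).
Definition om_var (k : 'I_n) : LWring := 'X_(enum_rank (inr k : LWvar)).

Definition LambdaG (E : rel 'I_n) : 'M[LWring]_n :=
  \matrix_(u, v) (if E u v then lam_var u v else 0).
Definition OmegaG : 'rV[LWring]_n := \row_k om_var k.

Definition SigmaSym : 'M[Sring]_n := \matrix_(u, v) 'X_(enum_rank ((u, v) : Svar)).

Definition phistar (E : rel 'I_n) (f : Sring) : LWring :=
  comp_mpoly [tuple (let uv := enum_val t in phiG (LambdaG E) OmegaG uv.1 uv.2)
             | t < nS] f.

(* f in <g> : h^oo  (saturation of the principal ideal <g>) *)
Definition in_sat_principal (f g h : LWring) : Prop :=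
  exists (k : nat) (q : LWring), f * h ^+ k = q * g.

Definition in_model (E : rel 'I_n) (S : 'M[R]_n) : Prop :=
  exists (L : 'M[R]_n) (w : 'rV[R]_n),
    (forall u v, ~~ E u v -> L u v = 0) /\ (forall k, 0 < w 0 k) /\ S = phiG L w.
End Rings.

From HB Require Import structures.
From mathcomp Require Import all_boot all_order all_algebra.
From mathcomp Require Import mpoly.
From mathcomp Require Import reals.
From mathcomp Require Import zify.

(* Membership in the saturation means phi^*(f) * phi^*(h)^k = q * phi^*(g) in
   R[lambda, omega], where f and g are the minors for (a, b | C) and (i, j | K)
   and h is the product of all principal minors.  Evaluating at the parameters
   (L, w) of Sigma = phi_G(L, w) turns phi^* into evaluation at Sigma, so
   f(Sigma) * h(Sigma)^k = q(L, w) * g(Sigma) = 0.  As the support of L is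
   acyclic, L is nilpotent and A = (I - L)^-1 exists; then Sigma = A^T diag(w) A
   with w > 0 is positive definite, so h(Sigma) != 0 and f(Sigma) = 0. *)

Set Implicit Arguments. Unset Strict Implicit. Unset Printing Implicit Defensive.
Import Order.TTheory GRing.Theory Num.Theory.
Local Open Scope ring_scope.

Definition edge_supported (T : nmodType) n (E : rel 'I_n) (M : 'M[T]_n) : Prop :=
  forall u v, ~~ E u v -> M u v = 0.

Definition mxpow (T : pzSemiRingType) n (M : 'M[T]_n) (k : nat) : 'M[T]_n :=
  iter k (mulmxr M) 1%:M.

Section DAGNilpotent.
Variables (T : pzRingType) (n : nat) (E : rel 'I_n).
Hypothesis dagE : is_DAG E.

Definition ndesc (v : 'I_n) : nat := #|[set w | descendant E v w]|.

Lemma ndesc_gt0 v : (0 < ndesc v)%N.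
Proof. by apply/card_gt0P; exists v; rewrite inE /descendant connect0. Qed.

Lemma ndesc_le v : (ndesc v <= n)%N.
Proof. by rewrite -[n]card_ord max_card. Qed.

Lemma ndesc_edge u v : E u v -> (ndesc v < ndesc u)%N.
Proof.
move=> Euv; apply/proper_card/properP; split.
  by apply/subsetP=> x; rewrite !inE; apply/connect_trans/connect1.
by exists u; rewrite !inE /descendant ?connect0 //; apply: dagE.
Qed.

(* A nonzero entry of M^k comes from a directed walk of length k, along which
   ndesc strictly decreases. *)
Lemma mxpow_neq0_ndesc (M : 'M[T]_n) k u v :
  edge_supported E M -> mxpow M k u v != 0 -> (ndesc v + k <= ndesc u)%N.
Proof.
move=> suppM; elim: k v => [|k IHk] v /=.
  by rewrite mxE addn0; have [->|_] := eqVneq u v; rewrite ?eqxx.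
rewrite [_ u v]mxE => nz.
have [x /andP[powx Mxv]] : exists x, (mxpow M k u x != 0) && (M x v != 0).
  apply/existsP; apply: contraNT nz => /existsPn allx.
  by apply/eqP/big1 => x _; have /nandP[] := allx x => /negbNE/eqP->;
    rewrite ?mul0r ?mulr0.
have Exv : E x v by apply: contraNT Mxv => /suppM ->.
by have := IHk _ powx; have := ndesc_edge Exv; lia.
Qed.

Lemma mxpow_DAG_nilpotent (M : 'M[T]_n) : edge_supported E M -> mxpow M n = 0.
Proof.
move=> suppM; apply/matrixP=> u v; rewrite mxE; apply: contraTeq isT => nz.
by have := mxpow_neq0_ndesc suppM nz; have := ndesc_gt0 v; have := ndesc_le u; lia.
Qed.

End DAGNilpotent.

Lemma geometric_sum_mxpow (T : pzRingType) n (M : 'M[T]_n) m :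
  (\sum_(k < m) mxpow M k) *m (1%:M - M) = 1%:M - mxpow M m.
Proof.
elim: m => [|m IHm]; first by rewrite big_ord0 mul0mx subrr.
by rewrite big_ord_recr mulmxDl IHm mulmxBr mulmx1 addrA subrK.
Qed.

Lemma unitmx_1B_DAG (T : comUnitRingType) n (E : rel 'I_n) (M : 'M[T]_n) :
  is_DAG E -> edge_supported E M -> 1%:M - M \in unitmx.
Proof.
move=> dagE suppM; have := geometric_sum_mxpow M n.
by rewrite (mxpow_DAG_nilpotent dagE suppM) subr0 => /mulmx1_unit[].
Qed.

Lemma map_invmx_unit (S T : comUnitRingType) (f : {rmorphism S -> T}) n (A : 'M[S]_n) :
  A \in unitmx -> map_mx f (invmx A) = invmx (map_mx f A).
Proof.
move=> unitA; have fAK : map_mx f (invmx A) *m map_mx f A = 1%:M.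
  by rewrite -map_mxM mulVmx // map_mx1.
have [_ unitfA] := mulmx1_unit fAK.
by rewrite -[LHS](mulmxK unitfA) fAK mul1mx.
Qed.

Lemma rmorph_minorAC (S T : comUnitRingType) (f : {rmorphism S -> T}) n
    (M : 'M[S]_n) a b C :
  f (minorAC M a b C) = minorAC (map_mx f M) a b C.
Proof. by rewrite -det_map_mx; congr (\det _); apply/matrixP => ? ?; rewrite !mxE. Qed.

Lemma rmorph_pminor (S T : comUnitRingType) (f : {rmorphism S -> T}) n
    (M : 'M[S]_n) D :
  f (pminor M D) = pminor (map_mx f M) D.
Proof. by rewrite -det_map_mx; congr (\det _); apply/matrixP => ? ?; rewrite !mxE. Qed.

Lemma diag_quad_eq0 (R : realDomainType) n (w : 'rV[R]_n) (z : 'rV[R]_n) :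
  (forall k, 0 < w 0 k) -> z *m diag_mx w *m z^T = 0 -> z = 0.
Proof.
move=> wpos /matrixP/(_ 0 0); rewrite mul_mx_diag !mxE.
under eq_bigr do rewrite !mxE mulrAC -expr2.
move/psumr_eq0P => terms0; apply/matrixP => i k; rewrite (ord1 i) [RHS]mxE.
have /eqP := terms0 (fun k _ => mulr_ge0 (sqr_ge0 _) (ltW (wpos k))) k isT.
by rewrite mulf_eq0 (gt_eqF (wpos k)) orbF sqrf_eq0 => /eqP.
Qed.

Lemma mxsub1_inj (R : pzRingType) m n (f : 'I_m -> 'I_n) :
  injective f -> mxsub f f (1%:M : 'M[R]_n) = 1%:M.
Proof. by move=> injf; apply/matrixP => i j; rewrite !mxE (inj_eq injf). Qed.

Lemma mxsub_rowsub1E (R : pzRingType) m n (f : 'I_m -> 'I_n) (M : 'M[R]_n) :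
  mxsub f f M = rowsub f 1%:M *m M *m (rowsub f 1%:M)^T.
Proof.
by rewrite trmx_mxsub trmx1 -mulmxA mulmx_colsub -mxsub_mul mul1mx mulmx1.
Qed.

Lemma pminor_gram_neq0 (R : realFieldType) n (A : 'M[R]_n) (w : 'rV[R]_n)
    (D : {set 'I_n}) :
  A \in unitmx -> (forall k, 0 < w 0 k) -> pminor (A^T *m diag_mx w *m A) D != 0.
Proof.
move=> unitA wpos; set Sg := A^T *m diag_mx w *m A.
pose P : 'M[R]_(#|D|, n) := rowsub enum_val 1%:M.
have PPT : P *m P^T = 1%:M.
  by rewrite -[RHS](mxsub1_inj _ (@enum_val_inj _ (mem D))) mxsub_rowsub1E mulmx1.
have -> : pminor Sg D = \det (P *m Sg *m P^T) by rewrite -mxsub_rowsub1E.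
apply/det0P => -[v v_neq0 vSg0].
have vP0 : v *m P = 0.
  have : v *m P *m A^T *m diag_mx w *m (v *m P *m A^T)^T = 0.
    by rewrite !trmx_mul trmxK -[RHS](mul0mx _ v^T) -vSg0 /Sg !mulmxA.
  move/(diag_quad_eq0 wpos)/(congr1 (mulmx^~ (invmx A^T))).
  by rewrite mulmxK ?unitmx_tr // mul0mx.
by move/eqP: v_neq0; apply; rewrite -[v]mulmx1 -PPT mulmxA vP0 mul0mx.
Qed.

Lemma sat_principal_eval (R : realType) n (T : idomainType)
    (f : {rmorphism LWring R n -> T}) (p g h : LWring R n) :
  in_sat_principal p g h -> f g = 0 -> f h != 0 -> f p = 0.
Proof.
move=> [k [q sat]] fg0 /negPf fh_neq0; apply/eqP.
move/(congr1 f)/eqP: sat; rewrite !rmorphM rmorphXn fg0 mulr0 mulf_eq0 expf_eq0.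
by rewrite fh_neq0 andbF orbF.
Qed.

Section Evaluation.
Variables (R : realType) (n : nat).

Definition param_point (L : 'M[R]_n) (w : 'rV[R]_n) (t : 'I_(nLW n)) : R :=
  match enum_val t with inl uv => L uv.1 uv.2 | inr k => w 0 k end.

Definition cov_point (Sg : 'M[R]_n) (s : 'I_(nS n)) : R :=
  Sg (enum_val s).1 (enum_val s).2.

Lemma meval_SigmaSym (Sg : 'M[R]_n) :
  map_mx (meval (cov_point Sg)) (SigmaSym R n) = Sg.
Proof. by apply/matrixP=> u v; rewrite !mxE mevalXU /cov_point enum_rankK. Qed.

Lemma meval_minorAC_SigmaSym (Sg : 'M[R]_n) a b C :
  meval (cov_point Sg) (minorAC (SigmaSym R n) a b C) = minorAC Sg a b C.
Proof. by rewrite rmorph_minorAC meval_SigmaSym. Qed.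

Lemma meval_pminor_SigmaSym (Sg : 'M[R]_n) D :
  meval (cov_point Sg) (pminor (SigmaSym R n) D) = pminor Sg D.
Proof. by rewrite rmorph_pminor meval_SigmaSym. Qed.

Variables (E : rel 'I_n) (L : 'M[R]_n) (w : 'rV[R]_n).
Hypotheses (dagE : is_DAG E) (suppL : edge_supported E L).

Local Notation ev := (meval (param_point L w)).

Lemma meval_LambdaG : map_mx ev (LambdaG R E) = L.
Proof.
apply/matrixP=> u v; rewrite !mxE.
case: ifPn => [_|/suppL ->]; last exact: meval0.
by rewrite mevalXU /param_point enum_rankK.
Qed.

Lemma meval_OmegaG : map_mx ev (OmegaG R n) = w.
Proof.
by apply/matrixP=> u v; rewrite !mxE mevalXU /param_point enum_rankK (ord1 u).
Qed.

Lemma meval_phiG : map_mx ev (phiG (LambdaG R E) (OmegaG R n)) = phiG L w.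
Proof.
have suppLG : edge_supported E (LambdaG R E).
  by move=> u v /negPf Euv; rewrite mxE Euv.
rewrite /phiG !map_mxM -map_trmx map_diag_mx.
rewrite map_invmx_unit ?(unitmx_1B_DAG dagE suppLG) //.
by rewrite map_mxB map_mx1 meval_LambdaG meval_OmegaG.
Qed.

Lemma meval_phistar f : ev (phistar E f) = meval (cov_point (phiG L w)) f.
Proof.
rewrite comp_mpoly_meval; apply: meval_eq => s.
by rewrite tnth_mktuple /cov_point -meval_phiG [RHS]mxE.
Qed.

End Evaluation.

Theorem corollary3p6 (R : realType) (n : nat) (E : rel 'I_n)
  (i j : 'I_n) (K : {set 'I_n}) (a b : 'I_n) (C : {set 'I_n}) :
  is_DAG E ->
  i != j -> i \notin K -> j \notin K ->
  ~ d_separates E K i j ->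
  a != b -> a \notin C -> b \notin C ->
  in_sat_principal
    (@phistar R n E (minorAC (SigmaSym R n) a b C))
    (@phistar R n E (minorAC (SigmaSym R n) i j K))
    (\prod_(S : {set 'I_n}) @phistar R n E (pminor (SigmaSym R n) S)) ->
  forall Sigma : 'M[R]_n,
    in_model E Sigma -> minorAC Sigma i j K = 0 ->
    minorAC Sigma a b C = 0.
Proof.
move=> dagE _ _ _ _ _ _ _ sat _ [L [w [suppL [wpos ->]]]] minorijK0.
have ev_phistar := meval_phistar w dagE suppL.
have unitA : invmx (1%:M - L) \in unitmx.
  by rewrite unitmx_inv (unitmx_1B_DAG dagE suppL).
rewrite -meval_minorAC_SigmaSym -ev_phistar.
apply: (@sat_principal_eval R n R (meval (param_point L w)) _ _ _ sat) => /=.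
  by rewrite ev_phistar meval_minorAC_SigmaSym.
rewrite rmorph_prod; apply/prodf_neq0 => S _ /=.
by rewrite ev_phistar meval_pminor_SigmaSym pminor_gram_neq0.
Qed.
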